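(* Let $c\ge0$, let $\rho:[0,\infty)\to[0,\infty)$ be non-decreasing and differentiable, and let $f,g:[0,\infty)\to[0,\infty)$ be Borel measurable and such that $$\Delta:=\sup_{r\ge r_0}\rho\Big(\int_{r_0}^r g(u)du+c\Big)^{1+\beta}\int_r^\infty f(u)du<\infty$$ for some $r_0\ge0$ and $\beta\ge0$. Then: (i) if $\beta>0$, for all $r\ge r_0$, $$\int_r^\infty\rho\Big(\int_{r_0}^u g(v)dv+c\Big)f(u)du\le\frac{\Delta(1+\beta)}{\beta}\rho\Big(\int_{r_0}^r g(u)du+c\Big)^{-\beta};$$ (ii) if $\beta=0$ and either $\int_{r_0}^\infty g(r)dr<\infty$ or $\rho$ is bounded, then for all $r\ge r_0$, $$\int_r^\infty\rho\Big(\int_{r_0}^u g(v)dv+c\Big)f(u)du\le\Delta+\Delta\ln\frac{\rho\big(\int_{r_0}^\infty g(u)du+c\big)}{\rho\big(\int_{r_0}^r g(u)du+c\big)},$$ where in the bounded case $\rho(\int_{r_0}^\infty g+c)$ is understood as $\lim_{t\to\infty}\rho(t)$ if the integral diverges. *)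

From HB Require Import structures.
From mathcomp Require Import all_boot all_order all_algebra.
From mathcomp Require Import all_classical all_reals all_analysis.
Set Implicit Arguments. Unset Strict Implicit. Unset Printing Implicit Defensive.
Import Order.TTheory GRing.Theory Num.Theory.
Import numFieldNormedType.Exports.
Local Open Scope classical_set_scope.
Local Open Scope ring_scope.

(* Extension of rho : [0,oo) -> [0,oo) to the extended reals: on finite
   arguments it is rho itself; at +oo it is sup_{t >= 0} rho t, which for a
   non-decreasing rho is lim_{t -> oo} rho t (possibly +oo). The value at -oo
   is never used (all arguments are >= c >= 0). *)
Definition rhoE {R : realType} (rho : R -> R) (x : \bar R) : \bar R :=
  match x with
  | EFin r => (rho r)%:E
  | EPInf => ereal_sup [set (rho t)%:E | t in `[0%R, +oo[]
  | ENInf => 0%E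
  end.

Definition Gint {R : realType} (g : R -> R) (r0 c r : R) : \bar R :=
  (\int[lebesgue_measure]_(u in `[r0, r]) (g u)%:E + c%:E)%E.

Definition Ginf {R : realType} (g : R -> R) (r0 c : R) : \bar R :=
  (\int[lebesgue_measure]_(u in `[r0, +oo[) (g u)%:E + c%:E)%E.

Definition Ftail {R : realType} (f : R -> R) (r : R) : \bar R :=
  (\int[lebesgue_measure]_(u in `[r, +oo[) (f u)%:E)%E.

Definition Delta {R : realType} (rho f g : R -> R) (r0 c beta : R) : \bar R :=
  ereal_sup [set (poweR (rhoE rho (Gint g r0 c r)) (1 + beta) * Ftail f r)%E
            | r in `[r0, +oo[].

Definition tail_int {R : realType} (rho f g : R -> R) (r0 c r : R) : \bar R :=
  (\int[lebesgue_measure]_(u in `[r, +oo[) (rhoE rho (Gint g r0 c u) * (f u)%:E))%E.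

From HB Require Import structures.
From mathcomp Require Import all_boot all_order all_algebra.
From mathcomp Require Import all_classical all_reals all_analysis.
Import Order.TTheory GRing.Theory Num.Theory.
Import numFieldNormedType.Exports.
From mathcomp Require Import ring measurable_realfun.
Local Open Scope classical_set_scope.
Local Open Scope ring_scope.

(* The proof goes through the layer-cake formula.  The weight phi = rho o G
   is non-negative and non-decreasing, so by Tonelli
     \int_r^oo phi f = \int_0^oo m_r(t) dt,  m_r(t) = \int_{u >= r, phi u > t} f.
   The superlevel set {u >= r | phi u > t} is closed upwards, hence m_r(t) is
   at most the tail F(u) at any of its points; with the definition of Delta
   this gives m_r(t) <= F(r), m_r(t) <= Delta t^-(1+beta), and m_r(t) = 0 for
   t >= sup phi.  Splitting \int_0^oo at x = phi(r) and using
   F(r) x^(1+beta) <= Delta, the integral is at most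
     Delta x^-beta + Delta x^-beta / beta     when beta > 0,
     Delta + Delta (ln (sup phi) - ln x)      when beta = 0. *)

Section calculus.
Context {R : realType}.
Local Notation mu := (@lebesgue_measure R).

Lemma powRN_cvgy0 (b : R) : 0 < b -> x `^ (- b) @[x --> +oo] --> 0.
Proof.
move=> b0; apply/cvgrPdist_lt => e e0; near=> x.
rewrite sub0r normrN ger0_norm ?powR_ge0//.
have x0 : 0 < x by near: x; exact: nbhs_pinfty_gt.
have xM : expR (- ln e / b) < x by near: x; exact: nbhs_pinfty_gt.
rewrite /powR gt_eqF// -[ltRHS](@lnK _ e) ?posrE//.
rewrite ltr_expR mulNr ltrNl -ltr_pdivrMl// mulrC.
rewrite -(@ltr_ln _ (expR _)) ?posrE ?expR_gt0// expRK in xM.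
by apply: le_lt_trans xM; rewrite mulNr.
Unshelve. all: by end_near. Qed.

Lemma powR_continuous_at (p x : R) : 0 < x -> {for x, continuous (@powR R ^~ p)}.
Proof.
move=> x0; apply: differentiable_continuous; apply/derivable1_diffP.
by apply: derivable_powR; rewrite in_itv/= andbT.
Qed.

Lemma is_derive_powR_antiderivative (b x : R) : 0 < b -> 0 < x ->
  is_derive x 1 (fun y : R => - y `^ (- b) / b) (x `^ (- (1 + b))).
Proof.
move=> b0 x0.
have -> : (fun y : R => - y `^ (- b) / b) = (- b^-1) \*: (@powR R ^~ (- b)).
  by apply/funext => y /=; rewrite /GRing.scale/= mulrC; ring.
apply: (is_derive_eq (is_deriveZ (- b^-1) (is_derive1_powR (- b) x0))).
by rewrite /GRing.scale/= mulrA mulrNN mulVf ?gt_eqF// mul1r opprD addrC.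
Qed.

Lemma integral_powR_tail (a b : R) : 0 < a -> 0 < b ->
  (\int[mu]_(x in `[a, +oo[) (x `^ (- (1 + b)))%:E = (a `^ (- b) / b)%:E)%E.
Proof.
move=> a0 b0; pose F (y : R) := - y `^ (- b) / b.
rewrite (@ge0_continuous_FTC2y _ _ F _ 0).
- by rewrite sub0e /F -EFinN mulNr opprK.
- by move=> x _; exact: powR_ge0.
- apply: continuous_in_subspaceT => x; rewrite inE/= in_itv/= andbT => ax.
  by apply: powR_continuous_at; exact: lt_le_trans ax.
- rewrite /F -(mul0r b^-1) -oppr0.
  by apply: cvgMr_tmp; apply: cvgN; exact: powRN_cvgy0.
- by move=> x ax; have [] := is_derive_powR_antiderivative _ _ b0 (lt_trans a0 ax).
- apply: cvg_at_right_filter.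
  have := is_derive_powR_antiderivative _ _ b0 a0.
  by move=> /(@ex_derive _ _ _ _ _ _ _) /derivable1_diffP /differentiable_continuous.
- move=> x; rewrite in_itv/= andbT => ax.
  rewrite derive1E.
  by have [_ ->] := is_derive_powR_antiderivative _ _ b0 (lt_trans a0 ax).
Qed.

Lemma integral_inv (a b : R) : 0 < a -> a < b ->
  (\int[mu]_(x in `[a, b]) (x^-1)%:E = (ln b - ln a)%:E)%E.
Proof.
move=> a0 ab.
rewrite (@continuous_FTC2 _ _ (@ln R))//.
- apply: continuous_in_subspaceT => x; rewrite inE/= in_itv/= => /andP[ax _].
  by apply: inv_continuous; rewrite gt_eqF// (lt_le_trans a0 ax).
- split.
  + move=> x; rewrite in_itv/= => /andP[ax _].
    by have [] := is_derive1_ln (lt_trans a0 ax).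
  + by apply: cvg_at_right_filter; exact: continuous_ln.
  + by apply: cvg_at_left_filter; apply: continuous_ln; exact: lt_trans ab.
- move=> x; rewrite in_itv/= => /andP[ax _].
  by rewrite derive1E; have [_ ->] := is_derive1_ln (lt_trans a0 ax).
Qed.

End calculus.

Section integral_tools.
Context {R : realType}.
Local Notation mu := (@lebesgue_measure R).

Lemma measurable_fun_itv_ge0 (h : R -> R) (a : R) (b : itv_bound R) :
  measurable_fun (`[0, +oo[ : set R) h -> 0 <= a ->
  measurable_fun [set` Interval (BLeft a) b] h.
Proof.
move=> mh a0; apply: measurable_funS mh => //.
by apply: subset_itv; rewrite ?bnd_simp.
Qed.

Lemma itv_oy_bigcup (s : R) :
  `]s, +oo[%classic = \bigcup_n `[(s + n.+1%:R^-1)%R, +oo[%classic.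
Proof.
apply/seteqP; split => [x/=|x [n _ /=]]; rewrite !in_itv/= !andbT.
  move=> sx; exists (Num.truncn (x - s)^-1) => //=; rewrite in_itv/= andbT.
  rewrite -lerBrDl -[leRHS]invrK lef_pV2 ?posrE ?ltr0n ?invr_gt0 ?subr_gt0//.
  exact/ltW/truncnS_gt.
by apply: lt_le_trans; rewrite ltrDl invr_gt0 ltr0n.
Qed.

(* A tail integral is bounded by B as soon as all strictly later tails are:
   the open ray (s, oo) is the increasing union of the rays [s + 1/(n+1), oo),
   and the point s is negligible. *)
Lemma Ftail_le_of_gt (f : R -> R) (s : R) (B : \bar R) :
  measurable_fun `[s, +oo[ f -> (forall x, s <= x -> 0 <= f x) ->
  (forall u, s < u -> (Ftail f u <= B)%E) -> (Ftail f s <= B)%E.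
Proof.
move=> mf f0 FB; rewrite /Ftail -integral_itv_obnd_cbnd; last first.
  apply/measurable_EFinP; apply: measurable_funS mf => //.
  by apply: subset_itvr; rewrite bnd_simp.
rewrite itv_oy_bigcup.
set E := fun n => `[(s + n.+1%:R^-1)%R, +oo[%classic : set R.
have mE n : measurable (E n) by exact: measurable_itv.
have sub_n n : E n `<=` `[s, +oo[%classic.
  by apply: subset_itvr; rewrite bnd_simp lerDl invr_ge0.
have ndE : nondecreasing_seq E.
  move=> n m nm; apply/subsetPset; apply: subset_itvr; rewrite bnd_simp lerD2l.
  by rewrite lef_pV2 ?posrE ?ltr0n// ler_nat.
have cv : (\int[mu]_(x in E n) (f x)%:E)%E @[n --> \oo] -->
    (\int[mu]_(x in \bigcup_n E n) (f x)%:E)%E.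
  apply: ge0_nondecreasing_set_cvg_integral => //.
  - by move=> n; apply/measurable_EFinP; exact: measurable_funS mf.
  - by move=> n x /sub_n; rewrite /= in_itv/= andbT => sx; rewrite lee_fin f0.
rewrite -(cvg_lim _ cv) //.
apply: lime_le; first by apply/cvg_ex; eexists; exact: cv.
by apply: nearW => n; apply: FB; rewrite ltrDl invr_gt0 ltr0n.
Qed.

(* If A is an upward closed subset of [r, oo) and every tail integral
   \int_u^oo f with u in A is at most B, then so is \int_A f: with s = inf A,
   A lies in [s, oo) and contains every u > s. *)
Lemma integral_upclosed_le (f : R -> R) (r : R) (A : set R) (B : \bar R) :
  measurable_fun `[r, +oo[ f -> (forall x, r <= x -> 0 <= f x) -> (0 <= B)%E ->
  A `<=` `[r, +oo[ -> (forall u v, A u -> u <= v -> A v) ->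
  (forall u, A u -> Ftail f u <= B)%E ->
  (\int[mu]_(x in A) (f x)%:E <= B)%E.
Proof.
move=> mf f0 B0 Ar Aup AB.
have [[a Aa]|nA] := pselect (exists a, A a); last first.
  have -> : A = set0 by apply/seteqP; split => // x Ax; apply: nA; exists x.
  by rewrite integral_set0.
have lbA : lbound A r by move=> x /Ar; rewrite /= in_itv/= andbT.
set s := inf A.
have rs : r <= s by apply: lb_le_inf => //; exists a.
have As x : s < x -> A x.
  by move=> /(inf_lt (ex_intro _ a Aa))[y Ay yx]; exact: Aup Ay (ltW yx).
have Asub : A `<=` `[s, +oo[.
  by move=> x Ax; rewrite /= in_itv/= andbT; apply: ge_inf => //; exists r.
have msy : measurable_fun `[s, +oo[ f.
  by apply: measurable_funS mf => //; apply: subset_itvr; rewrite bnd_simp.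
have f0s x : s <= x -> 0 <= f x by move=> sx; apply: f0; exact: le_trans sx.
have mA : measurable A.
  apply: is_interval_measurable => x y Ax Ay z /andP[xz zy]; exact: Aup Ax xz.
apply: (@le_trans _ _ (Ftail f s)).
  apply: ge0_subset_integral => //; first exact/measurable_EFinP.
  by move=> x; rewrite /= in_itv/= andbT => sx; rewrite lee_fin f0s.
by apply: Ftail_le_of_gt => // u /As; exact: AB.
Qed.

Lemma nondecreasing_emeasurable (phi : R -> \bar R) (r : R) :
  (forall x y, r <= x -> x <= y -> (phi x <= phi y)%E) ->
  measurable_fun `[r, +oo[ phi.
Proof.
move=> nd mD; apply: (measurability _ (ErealGenOInfty.measurableE R)) => //.
move=> _ [_ [x ->] <-]; apply: is_interval_measurable.
move=> u v [ru pu] [rv pv] z /andP[uz zv]; split.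
  by move: ru; rewrite /= !in_itv/= !andbT => ru; exact: le_trans uz.
move: pu ru; rewrite /= !in_itv/= !andbT => pu ru.
exact: lt_le_trans pu (nd _ _ ru uz).
Qed.

Lemma lebesgue_measure_below (y : \bar R) : (0 <= y)%E ->
  mu [set t : R | 0 <= t /\ (t%:E < y)%E] = y.
Proof.
case: y => [x| |] //= x0.
- have -> : [set t : R | 0 <= t /\ (t%:E < x%:E)%E] = `[0, x[%classic.
    by apply/seteqP; split => t /=; rewrite in_itv/= lte_fin;
      [move=> [-> ->] | move=> /andP[-> ->]].
  rewrite lebesgue_measure_itv/= lte_fin; case: ltP => [_|xle]; first by rewrite sube0.
  by rewrite lee_fin in x0; congr EFin; apply/eqP; rewrite eq_le x0 xle.
- have -> : [set t : R | 0 <= t /\ (t%:E < +oo)%E] = `[0, +oo[%classic.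
    by apply/seteqP; split => t /=; rewrite in_itv/= ?ltry;
      [move=> [-> _] | move=> /andP[-> _]].
  by rewrite lebesgue_measure_itv/= ltry.
Qed.

Lemma measurable_below (y : \bar R) : measurable [set t : R | 0 <= t /\ (t%:E < y)%E].
Proof.
apply: is_interval_measurable => t1 t2 [t10 _] [_ t2y] z /andP[t1z zt2].
by split; [exact: le_trans t1z | apply: le_lt_trans t2y; rewrite lee_fin].
Qed.

Lemma integral_itv_split (m : R -> \bar R) (a x : R) (b : itv_bound R) :
  a <= x -> (BLeft x <= b)%O ->
  measurable_fun [set` Interval (BLeft a) b] m ->
  (forall t, [set` Interval (BLeft a) b] t -> (0 <= m t)%E) ->
  (\int[mu]_(t in [set` Interval (BLeft a) b]) m t =
   \int[mu]_(t in `[a, x[) m t + \int[mu]_(t in [set` Interval (BLeft x) b]) m t)%E.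
Proof.
move=> ax xb mm m0.
have E : [set` Interval (BLeft a) b] = `[a, x[ `|` [set` Interval (BLeft x) b].
  by rewrite -itv_bndbnd_setU// bnd_simp.
rewrite E ge0_integral_setU//; first by rewrite -E.
- by move=> t; rewrite -E; exact: m0.
- apply/disj_setPS => t [] /=; rewrite !in_itv/= => /andP[_ tx].
  by case: b xb mm m0 E => [? ?|[]] //= _ _ _ _; rewrite ?in_itv/= ?leNgt ?tx.
Qed.

Lemma integral_co_le_cst (m : R -> \bar R) (x y : R) : 0 < x ->
  measurable_fun `[0%R, x[ m ->
  (forall t, 0 <= t < x -> (0 <= m t)%E) -> (forall t, 0 <= t < x -> (m t <= y%:E)%E) ->
  (\int[mu]_(t in `[0%R, x[) m t <= (y * x)%:E)%E.
Proof.
move=> x0 mm m0 my.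
apply: (@le_trans _ _ (\int[mu]_(t in `[0%R, x[) (cst y%:E) t)%E).
  exact: ge0_le_integral.
rewrite integral_cst//; have := @lebesgue_measure_itv R `[0%R, x[.
by rewrite /= lte_fin x0 sube0 => ->; rewrite -EFinM.
Qed.

Lemma integral_split_le_pow (m : R -> \bar R) (x y d b : R) :
  0 < x -> 0 < b -> 0 <= d ->
  measurable_fun (`[0%R, +oo[ : set R) m -> (forall t, 0 <= t -> (0 <= m t)%E) ->
  (forall t, 0 <= t -> (m t <= y%:E)%E) ->
  (forall t, 0 < t -> (m t <= (d * t `^ (- (1 + b)))%:E)%E) ->
  (\int[mu]_(t in `[0%R, +oo[) m t <= (y * x + d * (x `^ (- b) / b))%:E)%E.
Proof.
move=> x0 b0 d0 mm m0 my mb.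
rewrite (@integral_itv_split m 0 x +oo%O) //; last 2 first.
- exact: ltW.
- by move=> t /=; rewrite in_itv/= andbT; exact: m0.
rewrite EFinD; apply: leeD.
  apply: integral_co_le_cst => //.
  - by apply: measurable_funS mm => //; apply: subset_itvl; rewrite bnd_simp.
  - by move=> t /andP[t0 _]; exact: m0.
  - by move=> t /andP[t0 _]; exact: my.
have pos t : x <= t -> 0 < t by exact: lt_le_trans x0.
apply: (@le_trans _ _ (\int[mu]_(t in `[x, +oo[) (d%:E * (t `^ (- (1 + b)))%:E))%E).
  apply: ge0_le_integral => //.
  - by move=> t /=; rewrite in_itv/= andbT => /pos/ltW; exact: m0.
  - by apply: measurable_funS mm => //; apply: subset_itvr; rewrite bnd_simp ltW.
  - apply/measurable_EFinP; apply: measurable_funM => //.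
    exact: measurable_funS (measurable_powR _).
  - by move=> t /=; rewrite in_itv/= andbT => /pos tx; rewrite -EFinM; exact: mb.
rewrite ge0_integralZl_EFin//.
- by rewrite integral_powR_tail// -EFinM.
- by move=> t _; rewrite lee_fin powR_ge0.
- by apply/measurable_EFinP; exact: measurable_funS (measurable_powR _).
Qed.

Lemma integral_split_le_log (m : R -> \bar R) (x y d F : R) :
  0 < x -> x <= y -> 0 <= d ->
  measurable_fun (`[0%R, +oo[ : set R) m -> (forall t, 0 <= t -> (0 <= m t)%E) ->
  (forall t, 0 <= t -> (m t <= F%:E)%E) ->
  (forall t, 0 < t -> (m t <= (d * t^-1)%:E)%E) ->
  (forall t, y <= t -> m t = 0%E) ->
  (\int[mu]_(t in `[0%R, +oo[) m t <= (F * x + d * (ln y - ln x))%:E)%E.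
Proof.
move=> x0 xy d0 mm m0 mF mb my.
have pos t : x <= t -> 0 < t by exact: lt_le_trans x0.
rewrite (@integral_itv_split m 0 x +oo%O) //; last 2 first.
- exact: ltW.
- by move=> t /=; rewrite in_itv/= andbT; exact: m0.
rewrite EFinD; apply: leeD.
  apply: integral_co_le_cst => //.
  - by apply: measurable_funS mm => //; apply: subset_itvl; rewrite bnd_simp.
  - by move=> t /andP[t0 _]; exact: m0.
  - by move=> t /andP[t0 _]; exact: mF.
move: xy; rewrite le_eqVlt => /predU1P[->|xy].
  by rewrite subrr mulr0 integral0_eq// => t /=; rewrite in_itv/= andbT; exact: my.
have mx : measurable_fun (`[x, +oo[ : set R) m.
  by apply: measurable_funS mm => //; apply: subset_itvr; rewrite bnd_simp ltW.
rewrite (@integral_itv_split m x y +oo%O) //; last 2 first.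
- exact: ltW.
- by move=> t /=; rewrite in_itv/= andbT => /pos/ltW; exact: m0.
rewrite [X in (_ + X)%E]integral0_eq ?adde0; last first.
  by move=> t /=; rewrite in_itv/= andbT; exact: my.
have minv : measurable_fun (`[x, y] : set R) (fun t : R => (t^-1)%:E).
  apply: (@eq_measurable_fun _ _ _ _ _ (fun t => (t `^ (- 1))%:E)).
    by move=> t; rewrite inE/= in_itv/= => /andP[/pos/ltW t0 _]; rewrite powR_inv1.
  by apply/measurable_EFinP; exact: measurable_funS (measurable_powR _).
have mdinv : measurable_fun (`[x, y] : set R) (fun t : R => d%:E * (t^-1)%:E)%E.
  exact: (emeasurable_funM (measurable_cst _) minv).
apply: (@le_trans _ _ (\int[mu]_(t in `[x, y[) (d%:E * (t^-1)%:E))%E).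
  apply: ge0_le_integral => //.
  - by move=> t /=; rewrite in_itv/= => /andP[/pos/ltW t0 _]; exact: m0.
  - by apply: measurable_funS mx => //; apply: subset_itvl; rewrite bnd_simp.
  - by apply: measurable_funS mdinv => //; apply: subset_itvl; rewrite bnd_simp.
  - by move=> t /=; rewrite in_itv/= => /andP[/pos t0 _]; rewrite -EFinM; exact: mb.
rewrite integral_itv_bndo_bndc; last first.
  by apply: measurable_funS mdinv => //; apply: subset_itvl; rewrite bnd_simp.
rewrite ge0_integralZl_EFin//.
- by rewrite integral_inv// -EFinM.
- by move=> t /=; rewrite in_itv/= => /andP[/pos/ltW t0 _]; rewrite lee_fin invr_ge0.
Qed.

End integral_tools.

Section layer_cake.
Context {R : realType}.
Local Notation mu := (@lebesgue_measure R).
Variables (phi : R -> \bar R) (f : R -> R) (r : R).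
Hypotheses (mf : measurable_fun `[r, +oo[ f) (f_ge0 : forall x, r <= x -> 0 <= f x)
  (phi_ge0 : forall x, r <= x -> (0 <= phi x)%E)
  (phi_nd : forall x y, r <= x -> x <= y -> (phi x <= phi y)%E).

Definition superlevel (t : R) : set R := [set u | r <= u /\ (t%:E < phi u)%E].

(* The integrand (u, t) |-> 1{u >= r, 0 <= t < phi u} f u of Tonelli's theorem. *)
Definition level_kernel (p : R * R) : \bar R :=
  if (r <= p.1) && (0 <= p.2) && (p.2%:E < phi p.1)%E then (f p.1)%:E else 0%E.

Lemma level_kernel_ge0 p : (0 <= level_kernel p)%E.
Proof.
by rewrite /level_kernel; case: ifPn => // /andP[/andP[ru _] _]; rewrite lee_fin f_ge0.
Qed.

Lemma measurable_level_kernel : measurable_fun setT level_kernel.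
Proof.
have mphi := @nondecreasing_emeasurable _ _ _ phi_nd.
pose S := (`[r, +oo[ `*` `[0, +oo[) `&`
  [set p : R * R | ((p.2)%:E < (phi \_ `[r, +oo[) p.1)%E].
have mS : measurable S.
  apply: measurableI; first exact: measurableX.
  rewrite -[X in measurable X]setTI; apply: measurable_lte => //.
  - by apply/measurable_EFinP; exact: measurable_snd.
  - by apply: measurableT_comp => //; exact/(measurable_restrictT _ _).1.
have -> : level_kernel = (fun p => ((\1_S p) * ((f \_ `[r, +oo[) p.1))%:E).
  apply/funext => -[u t]; rewrite /level_kernel /= indicE !patchE.
  have uD : (u \in `[r, +oo[%classic) = (r <= u).
    by apply/idP/idP; rewrite in_setE/= in_itv/= andbT.
  have -> : ((u, t) \in S) = [&& r <= u, 0 <= t & (t%:E < phi u)%E].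
    apply/idP/idP.
    - rewrite inE => -[[/= + +] /=]; rewrite !in_itv/= !andbT patchE => ru t0.
      by rewrite uD ru t0.
    - move=> /and3P[ru t0 tp]; rewrite inE; split; last by rewrite /= patchE uD ru.
      by split => /=; rewrite in_itv/= ?ru ?t0.
  rewrite uD; case: (r <= u); case: (0 <= t); case: (t%:E < phi u)%E => /=;
    by rewrite ?mul1r ?mul0r.
apply/measurable_EFinP; apply: measurable_funM; first exact: measurable_indic.
by apply: measurableT_comp => //; exact/(measurable_restrictT _ _).1.
Qed.

Lemma integral_level_kernel_height (u : R) : r <= u ->
  (\int[mu]_t level_kernel (u, t) = phi u * (f u)%:E)%E.
Proof.
move=> ru; set B := [set t : R | 0 <= t /\ (t%:E < phi u)%E].
transitivity (\int[mu]_t ((\1_B t)%:E * (f u)%:E))%E.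
  apply: eq_integral => t _; rewrite /level_kernel /= indicE ru /=.
  rewrite (_ : (t \in B) = (0 <= t) && (t%:E < phi u)%E); last first.
    by apply/idP/idP => [/set_mem[/= -> ->]//|/andP[h1 h2]]; apply/mem_set.
  by case: ifPn => _; rewrite ?mul1e ?mul0e.
rewrite ge0_integralZr//; last by rewrite lee_fin f_ge0.
- rewrite integral_indic//; last exact: measurable_below.
  congr (_ * _)%E; rewrite -[RHS](lebesgue_measure_below _ (phi_ge0 _ ru)).
  by congr (_ _); apply/seteqP; split => [t []|t Bt].
- by apply/measurable_EFinP; apply: measurable_indic; exact: measurable_below.
Qed.

Lemma integral_level_kernel_base (t : R) : 0 <= t ->
  (\int[mu]_u level_kernel (u, t) = \int[mu]_(u in superlevel t) (f u)%:E)%E.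
Proof.
move=> t0; rewrite [RHS]integral_mkcond; apply: eq_integral => u _.
rewrite patchE /level_kernel /= t0 andbT.
case: (boolP (u \in _)) => [/set_mem [/= -> ->]//|uA].
by case: ifPn => // /andP[ru tu]; exfalso; apply: (negP uA); exact: mem_set.
Qed.

Lemma layer_cake : (\int[mu]_(u in `[r, +oo[) (phi u * (f u)%:E) =
  \int[mu]_(t in `[0%R, +oo[) \int[mu]_(u in superlevel t) (f u)%:E)%E.
Proof.
transitivity (\int[mu]_u \int[mu]_t level_kernel (u, t))%E.
  rewrite integral_mkcond; apply: eq_integral => u _; rewrite patchE.
  case: ifPn => [|uD].
    by rewrite in_setE/= in_itv/= andbT => /integral_level_kernel_height.
  apply/esym; apply: integral0_eq => t _; rewrite /level_kernel /=.
  suff /negbTE -> : ~~ (r <= u) by [].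
  by apply: contra uD => ru; rewrite in_setE/= in_itv/= andbT.
rewrite (@fubini_tonelli _ _ _ _ _ mu mu _ measurable_level_kernel level_kernel_ge0).
rewrite [RHS]integral_mkcond; apply: eq_integral => t _; rewrite patchE.
case: ifPn => [|tD].
  by rewrite in_setE/= in_itv/= andbT => /integral_level_kernel_base.
apply: integral0_eq => u _; rewrite /level_kernel /=.
suff /negbTE -> : ~~ (0 <= t) by rewrite andbF.
by apply: contra tD => t0; rewrite in_setE/= in_itv/= andbT.
Qed.

Lemma measurable_superlevel_integral :
  measurable_fun (`[0%R, +oo[ : set R)
    (fun t => \int[mu]_(u in superlevel t) (f u)%:E)%E.
Proof.
apply: (@eq_measurable_fun _ _ _ _ _ (fubini_G mu level_kernel)).
  move=> t; rewrite inE/= in_itv/= andbT => t0.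
  by rewrite /fubini_G integral_level_kernel_base.
apply: measurable_funS (@measurable_fun_fubini_tonelli_G _ _ _ _ _ mu _
  measurable_level_kernel level_kernel_ge0) => //.
Qed.

End layer_cake.

Section proposition.
Context {R : realType}.
Local Notation mu := (@lebesgue_measure R).
Variables (c : R) (rho f g : R -> R) (r0 beta : R).
Hypotheses (c_ge0 : 0 <= c) (rho_ge0 : forall x, 0 <= x -> 0 <= rho x)
  (rho_nd : {in `[0, +oo[ &, {homo rho : x y / x <= y}})
  (mf : measurable_fun (`[0, +oo[ : set R) f)
  (mg : measurable_fun (`[0, +oo[ : set R) g)
  (f_ge0 : forall x, 0 <= x -> 0 <= f x) (g_ge0 : forall x, 0 <= x -> 0 <= g x)
  (r0_ge0 : 0 <= r0).

Local Notation G := (Gint g r0 c).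
Local Notation D := (Delta rho f g r0 c beta).

Lemma Gint_ge0 u : (0 <= G u)%E.
Proof.
rewrite /Gint; apply: adde_ge0; last by rewrite lee_fin.
apply: integral_ge0 => v; rewrite /= in_itv/= => /andP[r0v _].
by rewrite lee_fin g_ge0 // (le_trans r0_ge0 r0v).
Qed.

Lemma Gint_nondecreasing u v : u <= v -> (G u <= G v)%E.
Proof.
move=> uv; rewrite /Gint; apply: leeD => //; apply: ge0_subset_integral => //.
- by apply/measurable_EFinP; exact: measurable_fun_itv_ge0.
- move=> z; rewrite /= in_itv/= => /andP[r0z _].
  by rewrite lee_fin g_ge0 // (le_trans r0_ge0 r0z).
- by apply: subset_itvl; rewrite bnd_simp.
Qed.

Lemma Gint_le_Ginf u : (G u <= Ginf g r0 c)%E.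
Proof.
rewrite /Gint /Ginf; apply: leeD => //; apply: ge0_subset_integral => //.
- by apply/measurable_EFinP; exact: measurable_fun_itv_ge0.
- move=> z; rewrite /= in_itv/= andbT => r0z.
  by rewrite lee_fin g_ge0 // (le_trans r0_ge0 r0z).
- by move=> z; rewrite /= !in_itv/= => /andP[-> _].
Qed.

Lemma rho_le_rhoE_infty t : 0 <= t -> ((rho t)%:E <= rhoE rho +oo)%E.
Proof.
by move=> t0; apply: ereal_sup_ubound; exists t => //; rewrite /= in_itv/= andbT.
Qed.

Lemma rhoE_ge0 x : (0 <= x)%E -> (0 <= rhoE rho x)%E.
Proof.
case: x => [a| |] //= a0; first by rewrite lee_fin rho_ge0 // -lee_fin.
by apply: le_trans (rho_le_rhoE_infty _ (lexx 0)); rewrite lee_fin rho_ge0.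
Qed.

Lemma rhoE_nondecreasing x y :
  (0 <= x)%E -> (x <= y)%E -> (rhoE rho x <= rhoE rho y)%E.
Proof.
case: x => [a| |] //; case: y => [b| |] //= a0 ab; last exact: rho_le_rhoE_infty.
rewrite lee_fin; apply: rho_nd; rewrite ?in_itv/= ?andbT -?lee_fin//.
exact: le_trans ab.
Qed.

Definition rhoG (u : R) : \bar R := rhoE rho (G u).

Lemma rhoG_ge0 u : (0 <= rhoG u)%E.
Proof. exact: rhoE_ge0 _ (Gint_ge0 u). Qed.

Lemma rhoG_nondecreasing u v : u <= v -> (rhoG u <= rhoG v)%E.
Proof.
by move=> uv; apply: rhoE_nondecreasing _ _ (Gint_ge0 u) (Gint_nondecreasing _ _ uv).
Qed.

Lemma rhoG_le_Ginf u : (rhoG u <= rhoE rho (Ginf g r0 c))%E.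
Proof. exact: rhoE_nondecreasing _ _ (Gint_ge0 u) (Gint_le_Ginf u). Qed.

Lemma Ftail_ge0 u : 0 <= u -> (0 <= Ftail f u)%E.
Proof.
move=> u0; apply: integral_ge0 => v; rewrite /= in_itv/= andbT => uv.
by rewrite lee_fin f_ge0 // (le_trans u0 uv).
Qed.

Lemma Delta_ub u : r0 <= u -> (poweR (rhoG u) (1 + beta) * Ftail f u <= D)%E.
Proof.
by move=> r0u; apply: ereal_sup_ubound; exists u => //; rewrite /= in_itv/= andbT.
Qed.

Lemma Delta_ge0 : (0 <= D)%E.
Proof.
apply: le_trans (Delta_ub _ (lexx r0)); apply: mule_ge0; first exact: poweR_ge0.
exact: Ftail_ge0.
Qed.

Hypotheses (beta_ge0 : 0 <= beta) (Delta_fin : (D < +oo)%E).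

Lemma fine_DeltaK : (fine D)%:E = D.
Proof. by rewrite fineK// ge0_fin_numE// Delta_ge0. Qed.

(* Where phi is infinite the tail of f vanishes, as Delta is finite. *)
Lemma Ftail_rhoG_infty u : r0 <= u -> rhoG u = +oo%E -> Ftail f u = 0%E.
Proof.
move=> r0u pu; have p0 : 0 < 1 + beta by rewrite ltr_wpDr.
have := Delta_ub _ r0u; rewrite pu poweRyr ?gt_eqF//.
have := Ftail_ge0 _ (le_trans r0_ge0 r0u); rewrite le_eqVlt => /predU1P[<-//|Fu].
by rewrite gt0_mulye// leye_eq => /eqP Dy; move: Delta_fin; rewrite Dy ltxx.
Qed.

Lemma Ftail_finite_bound u x : r0 <= u -> rhoG u = x%:E -> 0 < x ->
  exists2 F : R, Ftail f u = F%:E & F * x `^ (1 + beta) <= fine D.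
Proof.
move=> r0u pu x0; have := Delta_ub _ r0u; rewrite pu poweR_EFin -fine_DeltaK.
have := Ftail_ge0 _ (le_trans r0_ge0 r0u).
case: (Ftail f u) => [F| |] //= _; last first.
  by rewrite gt0_muley ?lte_fin ?powR_gt0// leye_eq.
by rewrite -EFinM lee_fin mulrC => h; exists F.
Qed.

Definition level (r t : R) : \bar R :=
  (\int[mu]_(u in superlevel rhoG r t) (f u)%:E)%E.

Lemma tail_int_layer_cake r : r0 <= r ->
  tail_int rho f g r0 c r = (\int[mu]_(t in `[0%R, +oo[) level r t)%E.
Proof.
move=> r0r; apply: (@layer_cake _ rhoG f r).
- exact: measurable_fun_itv_ge0 (le_trans r0_ge0 r0r).
- by move=> x rx; apply: f_ge0; exact: le_trans r0_ge0 (le_trans r0r rx).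
- by move=> x _; exact: rhoG_ge0.
- by move=> x y _; exact: rhoG_nondecreasing.
Qed.

Lemma measurable_level r : r0 <= r -> measurable_fun (`[0%R, +oo[ : set R) (level r).
Proof.
move=> r0r; apply: (@measurable_superlevel_integral _ rhoG f r).
- exact: measurable_fun_itv_ge0 (le_trans r0_ge0 r0r).
- by move=> x rx; apply: f_ge0; exact: le_trans r0_ge0 (le_trans r0r rx).
- by move=> x y _; exact: rhoG_nondecreasing.
Qed.

(* m_r(t) <= B as soon as F(u) <= B on the superlevel set, which is upward closed. *)
Lemma level_le r t B : r0 <= r -> (0 <= B)%E ->
  (forall u, r <= u -> (t%:E < rhoG u)%E -> (Ftail f u <= B)%E) -> (level r t <= B)%E.
Proof.
move=> r0r B0 hB; apply: (@integral_upclosed_le _ f r) => //.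
- exact: measurable_fun_itv_ge0 (le_trans r0_ge0 r0r).
- by move=> x rx; apply: f_ge0; exact: le_trans r0_ge0 (le_trans r0r rx).
- by move=> u [ru _]; rewrite /= in_itv/= andbT.
- move=> u v [ru tu] uv; split; first exact: le_trans uv.
  exact: lt_le_trans tu (rhoG_nondecreasing _ _ uv).
- by move=> u [ru tu]; exact: hB.
Qed.

Lemma level_ge0 r t : r0 <= r -> (0 <= level r t)%E.
Proof.
move=> r0r; apply: integral_ge0 => u [ru _]; rewrite lee_fin f_ge0//.
exact: le_trans r0_ge0 (le_trans r0r ru).
Qed.

Lemma level_le_Ftail r t : r0 <= r -> (level r t <= Ftail f r)%E.
Proof.
move=> r0r; have r_ge0 := le_trans r0_ge0 r0r.
apply: level_le => //; first exact: Ftail_ge0.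
move=> u ru _; apply: ge0_subset_integral => //.
- by apply/measurable_EFinP; exact: measurable_fun_itv_ge0.
- move=> v; rewrite /= in_itv/= andbT => rv.
  by rewrite lee_fin f_ge0 // (le_trans r_ge0 rv).
- by apply: subset_itvr; rewrite bnd_simp.
Qed.

Lemma level_le_powR r t : r0 <= r -> 0 < t ->
  (level r t <= (fine D * t `^ (- (1 + beta)))%:E)%E.
Proof.
move=> r0r t0; have d0 : 0 <= fine D by rewrite fine_ge0 ?Delta_ge0.
apply: level_le => //; first by rewrite lee_fin mulr_ge0 ?powR_ge0.
move=> u ru; have r0u := le_trans r0r ru.
case E : (rhoG u) => [z| |] // tz; last first.
  by rewrite Ftail_rhoG_infty// lee_fin mulr_ge0 ?powR_ge0.
have z0 : 0 < z by rewrite -lte_fin (lt_trans _ tz).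
have [F -> Fz] := Ftail_finite_bound _ _ r0u E z0.
rewrite lee_fin (@le_trans _ _ (fine D / z `^ (1 + beta)))//.
  by rewrite ler_pdivlMr ?powR_gt0.
rewrite powRN ler_wpM2l// lef_pV2 ?posrE ?powR_gt0//.
apply: ge0_ler_powR; rewrite ?nnegrE ?addr_ge0 ?(ltW t0) ?(ltW z0)//.
by apply: ltW; rewrite -lte_fin.
Qed.

Lemma level_Delta0 r t : r0 <= r -> 0 <= t -> D = 0%E -> level r t = 0%E.
Proof.
move=> r0r t0 D0; apply/eqP; rewrite eq_le level_ge0 // andbT.
apply: level_le => // u ru; have r0u := le_trans r0r ru.
case E : (rhoG u) => [z| |] // tz; last by rewrite Ftail_rhoG_infty.
have z0 : 0 < z by rewrite -lte_fin (le_lt_trans _ tz).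
have [F -> Fz] := Ftail_finite_bound _ _ r0u E z0.
by rewrite lee_fin -(pmulr_lle0 _ (powR_gt0 (1 + beta) z0)); move: Fz; rewrite D0.
Qed.

Lemma level_above r t : (rhoE rho (Ginf g r0 c) <= t%:E)%E -> level r t = 0%E.
Proof.
move=> yt; rewrite /level (_ : superlevel _ _ _ = set0) ?integral_set0//.
apply/seteqP; split => // u [ru tu].
by have := lt_le_trans tu (le_trans (rhoG_le_Ginf u) yt); rewrite ltxx.
Qed.

Lemma tail_int_eq0 r : r0 <= r -> (forall t, 0 <= t -> level r t = 0%E) ->
  tail_int rho f g r0 c r = 0%E.
Proof.
move=> r0r h; rewrite tail_int_layer_cake //.
by apply: integral0_eq => t; rewrite /= in_itv/= andbT; exact: h.
Qed.

(* The degenerate cases phi(r) = +oo (then F(r) = 0) and phi(r) = 0 (the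
   bound is +oo unless Delta = 0) are settled first. *)
Lemma tail_int_le_pos r : 0 < beta -> r0 <= r ->
  (tail_int rho f g r0 c r <=
   D * ((1 + beta) / beta)%:E * inve (poweR (rhoG r) beta))%E.
Proof.
move=> b0 r0r; set d := fine D; have d0 : 0 <= d by rewrite fine_ge0 ?Delta_ge0.
case E : (rhoG r) => [x| |]; last 2 first.
- rewrite poweRyr ?gt_eqF// invey mule0 tail_int_eq0// => t t0.
  apply/eqP; rewrite eq_le level_ge0// andbT -(Ftail_rhoG_infty _ r0r E).
  exact: level_le_Ftail.
- by have := rhoG_ge0 r; rewrite E.
have := rhoG_ge0 r; rewrite E lee_fin le_eqVlt => /predU1P[x0|x0].
  rewrite -x0 poweR_EFin powR0 ?gt_eqF// inve0.
  have := Delta_ge0; rewrite le_eqVlt => /predU1P[D0|D0].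
    by rewrite -D0 !mul0e tail_int_eq0// => t t0; exact: level_Delta0.
  by rewrite gt0_muley ?leey// mule_gt0// lte_fin divr_gt0// ltr_wpDr.
have [F FE Fx] := Ftail_finite_bound _ _ r0r E x0.
have Fxd : F * x <= d / x `^ beta.
  rewrite ler_pdivlMr ?powR_gt0// -mulrA -{1}(powRr1 (ltW x0)) -powRD//.
  by rewrite (gt_eqF x0) implybT.
rewrite tail_int_layer_cake//.
apply: (le_trans (@integral_split_le_pow _ (level r) x F d beta x0 b0 d0
  (measurable_level _ r0r) _ _ _)).
- by move=> t _; exact: level_ge0.
- by move=> t _; rewrite -FE; exact: level_le_Ftail.
- by move=> t t0; exact: level_le_powR.
rewrite poweR_EFin inver gt_eqF ?powR_gt0// -fine_DeltaK -!EFinM lee_fin powRN.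
have -> : d * ((1 + beta) / beta) * (x `^ beta)^-1 =
    d / x `^ beta + d * ((x `^ beta)^-1 / beta).
  by field; rewrite !gt_eqF ?powR_gt0.
by rewrite lerD2r.
Qed.

Lemma rhoE_Ginf_fin_num :
  ((\int[mu]_(u in `[r0, +oo[) (g u)%:E < +oo)%E \/
   (exists M : R, forall x, 0 <= x -> rho x <= M)) ->
  rhoE rho (Ginf g r0 c) \is a fin_num.
Proof.
move=> hyp; have Ginf0 : (0 <= Ginf g r0 c)%E := le_trans (Gint_ge0 r0) (Gint_le_Ginf r0).
rewrite ge0_fin_numE; last exact: rhoE_ge0.
case: hyp => [gfin | [M hM]].
- have : (Ginf g r0 c < +oo)%E by rewrite /Ginf lte_add_pinfty// ltry.
  by case: (Ginf g r0 c) Ginf0 => [z| |] //= _ _; rewrite ltry.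
- apply: (@le_lt_trans _ _ M%:E); last exact: ltry.
  case: (Ginf g r0 c) Ginf0 => [z| |] //= z0; first by rewrite lee_fin hM// -lee_fin.
  apply: ge_ereal_sup => _ [t t0 <-]; rewrite lee_fin hM//.
  by move: t0; rewrite /= in_itv/= andbT.
Qed.

Lemma tail_int_le_zero r : beta = 0 -> rhoE rho (Ginf g r0 c) \is a fin_num ->
  r0 <= r -> (0 < rhoG r)%E ->
  (tail_int rho f g r0 c r <=
   D + D * (ln (fine (rhoE rho (Ginf g r0 c)) / fine (rhoG r)))%:E)%E.
Proof.
move=> b0 yfin r0r; set d := fine D; have d0 : 0 <= d by rewrite fine_ge0 ?Delta_ge0.
set y := fine (rhoE rho (Ginf g r0 c)).
have Ey : rhoE rho (Ginf g r0 c) = y%:E by rewrite fineK.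
have := rhoG_le_Ginf r; rewrite Ey.
case E : (rhoG r) => [x| |] //; rewrite lee_fin lte_fin => xy x0 /=.
have [F FE Fx] := Ftail_finite_bound _ _ r0r E x0.
have b1 : 1 + beta = 1 by rewrite b0 addr0.
rewrite b1 (powRr1 (ltW x0)) in Fx.
rewrite tail_int_layer_cake//.
apply: (le_trans (@integral_split_le_log _ (level r) x y d F x0 xy d0
  (measurable_level _ r0r) _ _ _ _)).
- by move=> t _; exact: level_ge0.
- by move=> t _; rewrite -FE; exact: level_le_Ftail.
- move=> t t0; have := level_le_powR _ _ r0r t0.
  by rewrite b1 (powR_inv1 (ltW t0)).
- by move=> t yt; apply: level_above; rewrite Ey lee_fin.
have y0 : 0 < y := lt_le_trans x0 xy.
rewrite -fine_DeltaK -EFinM -EFinD lee_fin ln_div ?posrE//.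
by rewrite lerD2r.
Qed.

End proposition.

Theorem proposition2p6 (R : realType) (c : R) (rho f g : R -> R) (r0 beta : R) :
  0 <= c ->
  (* rho : [0,oo) -> [0,oo), non-decreasing, differentiable on [0,oo) *)
  (forall x, 0 <= x -> 0 <= rho x) ->
  {in `[0, +oo[ &, {homo rho : x y / x <= y}} ->
  (forall x, 0 < x -> derivable rho x 1) ->
  cvg ((fun h : R => h^-1 * (rho h - rho 0)) @ 0^'+) ->
  (* f, g : [0,oo) -> [0,oo) Borel measurable *)
  measurable_fun (`[0, +oo[ : set R) f -> measurable_fun (`[0, +oo[ : set R) g ->
  (forall x, 0 <= x -> 0 <= f x) -> (forall x, 0 <= x -> 0 <= g x) ->
  0 <= r0 -> 0 <= beta ->
  (Delta rho f g r0 c beta < +oo)%E ->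
  (* (i) *)
  (0 < beta ->
     forall r, r0 <= r ->
       (tail_int rho f g r0 c r <=
        Delta rho f g r0 c beta * ((1 + beta) / beta)%:E *
          inve (poweR (rhoE rho (Gint g r0 c r)) beta))%E)
  /\
  (* (ii) *)
  (beta = 0 ->
     ((\int[lebesgue_measure]_(u in `[r0, +oo[) (g u)%:E < +oo)%E \/
      (exists M : R, forall x, 0 <= x -> rho x <= M)) ->
     forall r, r0 <= r ->
       (0 < rhoE rho (Gint g r0 c r))%E ->
       (tail_int rho f g r0 c r <=
        Delta rho f g r0 c beta +
        Delta rho f g r0 c beta *
          (ln (fine (rhoE rho (Ginf g r0 c)) / fine (rhoE rho (Gint g r0 c r))))%:E)%E).
Proof.
move=> c0 rho0 rho_nd _ _ mf mg f0 g0 r00 beta0 Dfin; split.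
- by move=> b0 r r0r; apply: tail_int_le_pos.
- move=> b0 hyp r r0r pos; apply: tail_int_le_zero => //.
  exact: rhoE_Ginf_fin_num.
Qed.
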